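(* Every second-order polynomial has a polynomial majorant.
   Context: Second-order polynomials are the smallest class of functions $P\colon\mathbb N^{\mathbb N}\times\mathbb N\to\mathbb N$ that contains all $(l,n)\mapsto p(n)$ for polynomials $p$ with natural-number coefficients, and is closed under pointwise sum, pointwise product, and $P\mapsto P^+$ with $P^+(l,n)=l(P(l,n))$. A polynomial tree is a finite rooted tree in which each node is labeled by a polynomial in $\mathbb N[X_0,\ldots,X_k]$, $k$ being the number of children of that node, with the children of each node linearly ordered. Recursively assign functions to nodes: a leaf labeled $t$ gets $(l,n)\mapsto t(n)$; a node labeled $t$ with children (in order) assigned $P_1,\ldots,P_k$ gets $(l,n)\mapsto t(n,l(P_1(l,n)),\ldots,l(P_k(l,n)))$. The tree is a description of $P$ if $P$ is assigned to the root. A pair $(N,p)$ with $N\in\mathbb N$ and $p\colon\mathbb N\to\mathbb N$ is a majorant of $P$ if $p(n)\ge n$ for all $n$ and there is a description $T$ of $P$ such that $N$ is the height of $T$ and for every $n\in\mathbb N$ and every node $t$ of $T$ (with $k$ children) $p(n)\ge t(n,\ldots,n)$ (all $k+1$ variables set to $n$). It is a polynomial majorant if $p$ is a polynomial. *)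

From mathcomp Require Import all_boot.
Set Implicit Arguments. Unset Strict Implicit. Unset Printing Implicit Defensive.

(* Syntactic multivariate polynomials with natural-number coefficients.
   Variables are X_0, X_1, ...; [pvar i] is X_i. *)
Inductive pexpr : Type :=
| PConst : nat -> pexpr
| PVar : nat -> pexpr
| PAdd : pexpr -> pexpr -> pexpr
| PMul : pexpr -> pexpr -> pexpr.

Fixpoint peval (v : seq nat) (e : pexpr) : nat :=
  match e with
  | PConst c => c
  | PVar i => nth 0 v i
  | PAdd a b => peval v a + peval v b
  | PMul a b => peval v a * peval v b
  end.

Fixpoint pvars_lt (m : nat) (e : pexpr) : bool :=
  match e with
  | PConst _ => true
  | PVar i => i < m
  | PAdd a b => pvars_lt m a && pvars_lt m b
  | PMul a b => pvars_lt m a && pvars_lt m b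
  end.

Definition is_nat_poly (p : nat -> nat) : Prop :=
  exists e : pexpr, pvars_lt 1 e /\ forall n, p n = peval [:: n] e.

(* Second-order polynomials: the smallest class of functions
   (nat -> nat) -> nat -> nat containing (l,n) |-> p n for polynomials p,
   closed under pointwise sum, product and P |-> P^+ (l,n) = l (P l n).
   (Also closed under extensional equality, i.e. a class of functions.) *)
Inductive second_order_poly : ((nat -> nat) -> nat -> nat) -> Prop :=
| sop_poly (p : nat -> nat) :
    is_nat_poly p -> second_order_poly (fun l n => p n)
| sop_add P Q : second_order_poly P -> second_order_poly Q ->
    second_order_poly (fun l n => P l n + Q l n)
| sop_mul P Q : second_order_poly P -> second_order_poly Q ->
    second_order_poly (fun l n => P l n * Q l n)
| sop_plus P : second_order_poly P ->
    second_order_poly (fun l n => l (P l n))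
| sop_ext P Q : second_order_poly P -> (forall l n, P l n = Q l n) ->
    second_order_poly Q.

Inductive ptree : Type := PNode : pexpr -> seq ptree -> ptree.

Fixpoint ptree_wf (T : ptree) : bool :=
  match T with
  | PNode t cs => pvars_lt (size cs).+1 t && all ptree_wf cs
  end.

Fixpoint ptree_fun (T : ptree) (l : nat -> nat) (n : nat) : nat :=
  match T with
  | PNode t cs => peval (n :: map (fun c => l (ptree_fun c l n)) cs) t
  end.

Fixpoint ptree_height (T : ptree) : nat :=
  match T with
  | PNode _ cs => if cs is [::] then 0 else (foldr maxn 0 (map ptree_height cs)).+1
  end.

Fixpoint ptree_all_nodes (Q : pexpr -> nat -> Prop) (T : ptree) : Prop :=
  match T with
  | PNode t cs => Q t (size cs) /\ foldr (fun c acc => ptree_all_nodes Q c /\ acc) True cs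
  end.

Definition is_description (T : ptree) (P : (nat -> nat) -> nat -> nat) : Prop :=
  ptree_wf T /\ forall l n, ptree_fun T l n = P l n.

Definition majorant (N : nat) (p : nat -> nat) (P : (nat -> nat) -> nat -> nat) : Prop :=
  (forall n, n <= p n) /\
  exists T : ptree, is_description T P /\ ptree_height T = N /\
    forall n, ptree_all_nodes (fun t k => peval (nseq k.+1 n) t <= p n) T.

Definition polynomial_majorant (N : nat) (p : nat -> nat) P : Prop :=
  majorant N p P /\ is_nat_poly p.

(* Sums and products of second-order polynomials are described by merging the
   roots of their descriptions (renumbering the variables of the second root
   label past the children of the first), and [P^+] by a new root labelled
   [X_1] above a description of [P]; so every second-order polynomial has a
   description.  Given a description, replacing every variable of a label by
   [X_0] bounds its value at [(n, ..., n)], and [n] plus the sum of these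
   univariate polynomials over all nodes is a polynomial majorant. *)

From mathcomp Require Import all_boot.

Definition ptree_all_ind (Q : ptree -> Prop)
    (IH : forall t cs, foldr (fun c acc => Q c /\ acc) True cs -> Q (PNode t cs)) :
    forall T, Q T :=
  fix F T := match T with PNode t cs => IH t cs
    ((fix G cs : foldr (fun c acc => Q c /\ acc) True cs :=
       match cs with [::] => I | c :: cs' => conj (F c) (G cs') end) cs) end.

Lemma pvars_ltW m m' e : m <= m' -> pvars_lt m e -> pvars_lt m' e.
Proof.
move=> le_mm'; elim: e => [c|i|a IHa b IHb|a IHa b IHb] //=;
  try by move/andP=> [/IHa -> /IHb ->].
by move=> /leq_trans; apply.
Qed.

Lemma peval_cat v w e : pvars_lt (size v) e -> peval (v ++ w) e = peval v e.
Proof.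
elim: e => [c|i|a IHa b IHb|a IHa b IHb] //=;
  try by move/andP=> [/IHa -> /IHb ->].
by move=> lt_iv; rewrite nth_cat lt_iv.
Qed.

Fixpoint pdiag (e : pexpr) : pexpr :=
  match e with
  | PConst c => PConst c
  | PVar _ => PVar 0
  | PAdd a b => PAdd (pdiag a) (pdiag b)
  | PMul a b => PMul (pdiag a) (pdiag b)
  end.

Lemma pvars_lt_pdiag e : pvars_lt 1 (pdiag e).
Proof. by elim: e => //= a -> b ->. Qed.

(* Variables beyond the valuation evaluate to [0 <= n]. *)
Lemma peval_nseq_le_pdiag m n e : peval (nseq m n) e <= peval [:: n] (pdiag e).
Proof.
elim: e => [c|i|a IHa b IHb|a IHa b IHb] //=.
- by rewrite nth_nseq; case: ifP.
- exact: leq_add.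
- exact: leq_mul.
Qed.

Definition psum (es : seq pexpr) : pexpr := foldr PAdd (PConst 0) es.

Lemma pvars_lt_psum m es : pvars_lt m (psum es) = all (pvars_lt m) es.
Proof. by elim: es => //= e es ->. Qed.

Lemma peval_psum v es : peval v (psum es) = sumn (map (peval v) es).
Proof. by elim: es => //= e es ->. Qed.

Fixpoint ptree_diag_sum (T : ptree) : pexpr :=
  match T with PNode t cs => PAdd (pdiag t) (psum (map ptree_diag_sum cs)) end.

Lemma pvars_lt_ptree_diag_sum T : pvars_lt 1 (ptree_diag_sum T).
Proof.
elim/ptree_all_ind: T => t cs IH /=.
rewrite pvars_lt_pdiag pvars_lt_psum all_map.
by elim: cs IH => //= c cs IHcs [-> /IHcs].
Qed.

Lemma ptree_all_nodes_diag_sum T n B :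
  peval [:: n] (ptree_diag_sum T) <= B ->
  ptree_all_nodes (fun t k => peval (nseq k.+1 n) t <= B) T.
Proof.
elim/ptree_all_ind: T B => t cs IH B /=; rewrite peval_psum => le_B; split.
  apply: leq_trans (peval_nseq_le_pdiag (size cs).+1 n t) _.
  exact: leq_trans (leq_addr _ _) le_B.
have {le_B} : sumn (map (peval [:: n]) (map ptree_diag_sum cs)) <= B.
  exact: leq_trans (leq_addl _ _) le_B.
elim: cs IH => //= c cs IHcs [IHc IHcs'] le_B; split.
  by apply: IHc; apply: leq_trans le_B; apply: leq_addr.
by apply: IHcs => //; apply: leq_trans le_B; apply: leq_addl.
Qed.

Fixpoint pshift (s : nat) (e : pexpr) : pexpr :=
  match e with
  | PConst c => PConst c
  | PVar i => if i == 0 then PVar 0 else PVar (i + s)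
  | PAdd a b => PAdd (pshift s a) (pshift s b)
  | PMul a b => PMul (pshift s a) (pshift s b)
  end.

Lemma peval_pshift n a b e :
  peval (n :: a ++ b) (pshift (size a) e) = peval (n :: b) e.
Proof.
elim: e => [c|i|x IHx y IHy|x IHx y IHy] //=; try by rewrite IHx IHy.
case: i => //= i; rewrite nth_cat ifF ?addnK //.
by rewrite ltnNge leq_addl.
Qed.

Lemma pvars_lt_pshift s k e : pvars_lt k.+1 e -> pvars_lt (s + k).+1 (pshift s e).
Proof.
elim: e => [c|i|x IHx y IHy|x IHx y IHy] //=;
  try by move/andP=> [/IHx -> /IHy ->].
by case: i => //= i lt_ik; rewrite addSn ltnS addnC ltn_add2l.
Qed.

Definition ptree_merge (op : pexpr -> pexpr -> pexpr) (T1 T2 : ptree) : ptree :=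
  let: PNode t1 cs1 := T1 in let: PNode t2 cs2 := T2 in
  PNode (op t1 (pshift (size cs1) t2)) (cs1 ++ cs2).

Lemma is_description_merge (op : pexpr -> pexpr -> pexpr) (f : nat -> nat -> nat)
    T1 T2 P1 P2 :
  (forall v a b, peval v (op a b) = f (peval v a) (peval v b)) ->
  (forall m a b, pvars_lt m (op a b) = pvars_lt m a && pvars_lt m b) ->
  is_description T1 P1 -> is_description T2 P2 ->
  is_description (ptree_merge op T1 T2) (fun l n => f (P1 l n) (P2 l n)).
Proof.
move=> peval_op pvars_op; case: T1 => t1 cs1; case: T2 => t2 cs2.
move=> [/= /andP [wf_t1 wf_cs1] E1] [/= /andP [wf_t2 wf_cs2] E2]; split.
  rewrite /= pvars_op all_cat wf_cs1 wf_cs2 size_cat pvars_lt_pshift // !andbT.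
  by apply: pvars_ltW wf_t1; rewrite ltnS leq_addr.
move=> l n /=; rewrite peval_op map_cat -E1 -E2 /=.
rewrite -cat_cons peval_cat /= ?size_map //.
by rewrite -(size_map (fun c => l (ptree_fun c l n)) cs1) peval_pshift.
Qed.

Lemma second_order_poly_description P :
  second_order_poly P -> exists T, is_description T P.
Proof.
elim=> {P}.
- move=> p [e [vars_e Ep]]; exists (PNode e [::]).
  by split=> [|l n] /=; rewrite ?vars_e ?Ep.
- move=> P Q _ [T1 D1] _ [T2 D2]; exists (ptree_merge PAdd T1 T2).
  exact: (@is_description_merge PAdd addn).
- move=> P Q _ [T1 D1] _ [T2 D2]; exists (ptree_merge PMul T1 T2).
  exact: (@is_description_merge PMul muln).
- move=> P _ [T [wf_T E]]; exists (PNode (PVar 1) [:: T]).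
  by split=> [|l n] /=; rewrite ?wf_T ?E.
- move=> P Q _ [T [wf_T E]] EQ; exists T.
  by split=> // l n; rewrite E EQ.
Qed.

Lemma description_polynomial_majorant T P : is_description T P ->
  polynomial_majorant (ptree_height T) (fun n => n + peval [:: n] (ptree_diag_sum T)) P.
Proof.
move=> DT; split.
  split=> [n|]; first exact: leq_addr.
  exists T; do 2!split=> //.
  by move=> n; apply: ptree_all_nodes_diag_sum; apply: leq_addl.
exists (PAdd (PVar 0) (ptree_diag_sum T)).
by rewrite /= pvars_lt_ptree_diag_sum.
Qed.

Theorem mainTheorem4 (P : (nat -> nat) -> nat -> nat) :
  second_order_poly P -> exists (N : nat) (p : nat -> nat), polynomial_majorant N p P.
Proof.
move=> /second_order_poly_description [T DT].
by exists (ptree_height T), (fun n => n + peval [:: n] (ptree_diag_sum T));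
  apply: description_polynomial_majorant.
Qed.
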